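(* The Euler characteristic $\chi$ is a ring homomorphism from the strong ring $(\mathcal{G},\oplus,\boxtimes)$ to $\mathbb{Z}$; that is, $\chi(0)=0$, $\chi(K_1)=1$, $\chi(G\oplus H)=\chi(G)+\chi(H)$ and $\chi(G\boxtimes H)=\chi(G)\chi(H)$ for all $G,H\in\mathcal{G}$.
   Context: Graphs are finite simple graphs up to isomorphism. $G\oplus H$ is the disjoint union. The strong product $G\boxtimes H$ of $G=(V,E)$, $H=(W,F)$ has vertex set $V\times W$, distinct $(a,b),(c,d)$ adjacent iff ($a=c$ and $\{b,d\}\in F$) or ($b=d$ and $\{a,c\}\in E$) or ($\{a,c\}\in E$ and $\{b,d\}\in F$). $\mathcal{G}$ is the Grothendieck group of the monoid (graphs, $\oplus$), elements $A-B$ with $A-B=C-D$ iff $A\oplus D\oplus K=B\oplus C\oplus K$ for some graph $K$; the strong ring is $\mathcal{G}$ with $\boxtimes$ extended bilinearly, zero the empty graph and one $K_1$. For a graph $G$, $\chi(G)=\sum_{k\ge0}(-1)^k v_k(G)$ where $v_k(G)$ is the number of complete subgraphs $K_{k+1}$ of $G$, and $\chi(A-B)=\chi(A)-\chi(B)$. *)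

From HB Require Import structures.
From mathcomp Require Import all_boot all_order all_algebra.
Import Order.TTheory GRing.Theory Num.Theory.

Record graph : Type := Graph {
  gV : finType;
  gadj : rel gV;
  gsym : symmetric gadj;
  girr : irreflexive gadj }.

Definition giso (G H : graph) : Prop :=
  exists f : gV G -> gV H, bijective f /\ forall x y, gadj H (f x) (f y) = gadj G x y.

Definition empty_graph : graph :=
  @Graph void (fun _ _ => false) (fun _ _ => erefl) (fun _ => erefl).
Definition K1 : graph :=
  @Graph unit (fun _ _ => false) (fun _ _ => erefl) (fun _ => erefl).

Definition dunion_adj (G H : graph) : rel (gV G + gV H)%type :=
  fun x y => match x, y with
             | inl a, inl b => gadj G a b
             | inr a, inr b => gadj H a b
             | _, _ => false end.

Lemma dunion_sym G H : symmetric (dunion_adj G H).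
Proof. by case=> a [] b //=; apply: gsym. Qed.

Lemma dunion_irr G H : irreflexive (dunion_adj G H).
Proof. by case=> a /=; apply: girr. Qed.

Definition dunion (G H : graph) : graph :=
  @Graph (gV G + gV H)%type (dunion_adj G H) (@dunion_sym G H) (@dunion_irr G H).

Definition sprod_adj (G H : graph) : rel (gV G * gV H)%type :=
  fun x y => [|| (x.1 == y.1) && gadj H x.2 y.2,
                 (x.2 == y.2) && gadj G x.1 y.1
               | gadj G x.1 y.1 && gadj H x.2 y.2].

Lemma sprod_sym G H : symmetric (sprod_adj G H).
Proof.
by case=> a b [c d]; rewrite /sprod_adj /= (eq_sym a) (eq_sym b) (gsym G a) (gsym H b).
Qed.

Lemma sprod_irr G H : irreflexive (sprod_adj G H).
Proof. by case=> a b; rewrite /sprod_adj /= !girr !andbF. Qed.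

Definition sprod (G H : graph) : graph :=
  @Graph (gV G * gV H)%type (sprod_adj G H) (@sprod_sym G H) (@sprod_irr G H).

Definition is_clique (G : graph) (S : {set gV G}) : bool :=
  [forall x in S, forall y in S, (x != y) ==> gadj G x y].

Definition vk (G : graph) (k : nat) : nat :=
  #|[set S : {set gV G} | is_clique G S & #|S| == k.+1]|.

(* chi(G) = sum_{k>=0} (-1)^k v_k(G); v_k = 0 for k >= #|V|, so the sum is finite. *)
Definition chi (G : graph) : int :=
  (\sum_(k < #|gV G|) (-1) ^+ k * (vk G k)%:Z)%R.

(* Grothendieck group: formal differences A - B represented by pairs (A, B). *)
Definition gdiff : Type := (graph * graph)%type.

Definition grot_eq (x y : gdiff) : Prop :=
  exists K : graph,
    giso (dunion (dunion x.1 y.2) K) (dunion (dunion x.2 y.1) K).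

Definition gzero : gdiff := (empty_graph, empty_graph).
Definition gone : gdiff := (K1, empty_graph).
Definition gadd (x y : gdiff) : gdiff := (dunion x.1 y.1, dunion x.2 y.2).
(* (A - B)(C - D) = (AC + BD) - (AD + BC), strong product extended bilinearly *)
Definition gmul (x y : gdiff) : gdiff :=
  (dunion (sprod x.1 y.1) (sprod x.2 y.2), dunion (sprod x.1 y.2) (sprod x.2 y.1)).

Definition chiG (x : gdiff) : int := (chi x.1 - chi x.2)%R.

(** With w(S) = (-1)^|S| for a nonempty vertex set S and w(∅) = 0 ([nzsign]),
    chi G is minus the sum of w over the cliques of G.  The cliques of G ⊕ H
    are those of G and those of H, whence additivity.  A vertex set of G ⊠ H
    is a clique iff both its projections are, and the sum of w(S) over the S
    whose projections are exactly A and B is -w(A)w(B): both sides have the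
    same subset-sum transform, namely [A = ∅ or B = ∅] - 1 = sum of w over the
    subsets of A × B, and that transform is injective (Möbius inversion).
    Summing over pairs of cliques gives multiplicativity, and isomorphism
    invariance makes chi well defined on formal differences. *)

From mathcomp Require Import all_boot all_algebra ring.
Import GRing.Theory.
Local Open Scope ring_scope.

Lemma sum_subset_sign (R : pzRingType) (T : finType) (C : {set T}) :
  \sum_(S : {set T} | S \subset C) (-1 : R) ^+ #|S| = (C == set0)%:R.
Proof.
have [->|[x xC]] := set_0Vmem C.
  by rewrite eqxx (big_pred1 set0) ?cards0 // => S; rewrite subset0.
have /negbTE-> : C != set0 by apply/set0Pn; exists x.
(* toggling x pairs off the subsets of C with opposite signs *)
pose t (S : {set T}) := if x \in S then S :\ x else x |: S.
have tK : involutive t.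
  move=> S; rewrite /t; have [xS|xS] := boolP (x \in S).
    by rewrite setD11 setD1K.
  by rewrite setU11 setU1K.
rewrite (bigID (fun S : {set T} => x \in S)) /=.
rewrite [X in X + _](reindex_inj (inv_inj tK)) /=.
apply/eqP; rewrite addr_eq0 -sumrN; apply/eqP; apply: eq_big => S.
  rewrite /t; have [xS|xS] := boolP (x \in S); first by rewrite setD11 /= !andbF.
  by rewrite setU11 subUset sub1set xC !andbT.
rewrite /t; have [xS|xS] := boolP (x \in S); first by rewrite setD11 andbF.
by rewrite cardsU1 xS exprS mulN1r.
Qed.

Lemma subset_sum_inj (T : finType) (V : zmodType) (F G : {set T} -> V) :
  (forall A : {set T},
     \sum_(B : {set T} | B \subset A) F B = \sum_(B : {set T} | B \subset A) G B) ->
  F =1 G.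
Proof.
move=> eqFG A; elim: {A}_.+1 {-2}A (ltnSn #|A|) => // n IH A ltAn.
have := eqFG A; rewrite (bigD1 A) // [X in _ = X -> _](bigD1 A) //=.
rewrite (eq_bigr G); first exact: addIr.
move=> B /andP[sBA nBA]; apply: IH; rewrite -ltnS (leq_trans _ ltAn) // ltnS.
by apply: proper_card; rewrite properEneq nBA.
Qed.

Lemma subset_sum2_inj (X Y : finType) (V : zmodType)
    (F G : {set X} -> {set Y} -> V) :
  (forall (A : {set X}) (B : {set Y}),
     \sum_(A' : {set X} | A' \subset A) \sum_(B' : {set Y} | B' \subset B) F A' B'
     = \sum_(A' : {set X} | A' \subset A) \sum_(B' : {set Y} | B' \subset B) G A' B') ->
  F =2 G.
Proof.
move=> eqFG A; apply: subset_sum_inj => B.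
exact: (@subset_sum_inj _ _ (fun A' => \sum_(B' : {set Y} | B' \subset B) F A' B')
  (fun A' => \sum_(B' : {set Y} | B' \subset B) G A' B') (eqFG^~ B)).
Qed.

Definition nzsign {T : finType} (A : {set T}) : int := (-1) ^+ #|A| - (A == set0)%:R.

Lemma sum_subset_nzsign (T : finType) (C : {set T}) :
  \sum_(S : {set T} | S \subset C) nzsign S = (C == set0)%:R - 1.
Proof.
rewrite sumrB sum_subset_sign (bigD1 set0) ?sub0set //= eqxx big1 ?addr0 //.
by move=> S /andP[_ /negbTE->].
Qed.

Section Projections.

Variables X Y : finType.

Lemma subsetX_proj (S : {set X * Y}) (A : {set X}) (B : {set Y}) :
  (S \subset setX A B) = (fst @: S \subset A) && (snd @: S \subset B).
Proof.
apply/subsetP/andP => [sSAB | [/subsetP sSA /subsetP sSB]].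
  by split; apply/subsetP => _ /imsetP[[a b] /sSAB /setXP[? ?] ->].
move=> [a b] abS; apply/setXP.
by split; [apply: sSA | apply: sSB]; apply/imsetP; exists (a, b).
Qed.

Lemma sum_nzsign_proj (A : {set X}) (B : {set Y}) :
  \sum_(S : {set X * Y} | (fst @: S == A) && (snd @: S == B)) nzsign S
  = - (nzsign A * nzsign B).
Proof.
move: A B; apply: subset_sum2_inj => A B.
transitivity (\sum_(S : {set X * Y} | S \subset setX A B) nzsign S).
  rewrite pair_big /= [RHS](partition_big (fun S : {set X * Y} => (fst @: S, snd @: S))
    (fun p : {set X} * {set Y} => (p.1 \subset A) && (p.2 \subset B))) /= => [|S];
    last by rewrite subsetX_proj.
  apply: eq_bigr => -[A' B'] /= /andP[sA' sB']; apply: eq_bigl => S.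
  rewrite xpair_eqE subsetX_proj.
  by case: eqP => [->|]; case: eqP => [->|] //=; rewrite ?sA' ?sB' ?andbF.
rewrite sum_subset_nzsign.
under eq_bigr do rewrite sumrN -mulr_sumr.
rewrite sumrN -mulr_suml !sum_subset_nzsign -!cards_eq0 cardsX muln_eq0.
by case: eqP => _; case: eqP => _ /=; ring.
Qed.

End Projections.

Lemma is_cliqueP (G : graph) (S : {set gV G}) :
  reflect {in S &, forall x y, x != y -> gadj G x y} (is_clique G S).
Proof.
apply: (iffP forallP) => [clS x y xS yS nxy | clS x].
  by move: (clS x); rewrite xS => /forallP/(_ y); rewrite yS nxy.
apply/implyP => xS; apply/forallP => y.
by apply/implyP => yS; apply/implyP; apply: clS.
Qed.

Lemma clique0 (G : graph) : is_clique G set0.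
Proof. by apply/is_cliqueP => x; rewrite inE. Qed.

Lemma sum_clique_eq0 (G : graph) :
  \sum_(S : {set gV G} | is_clique G S) (S == set0)%:R = 1 :> int.
Proof.
rewrite (bigD1 set0) ?clique0 //= eqxx big1 ?addr0 //.
by move=> S /andP[_ /negbTE->].
Qed.

Lemma chiE (G : graph) : chi G = - \sum_(S : {set gV G} | is_clique G S) nzsign S.
Proof.
rewrite /chi /vk -sumrN.
transitivity (\sum_(k < #|gV G|) \sum_(S : {set gV G} | is_clique G S)
                 (if #|S| == k.+1 then (-1) ^+ k else 0 : int)).
  by apply: eq_bigr => k _; rewrite -big_mkcondr sumr_const -mulr_natr natz cardsE.
rewrite exchange_big; apply: eq_bigr => S _; rewrite -big_mkcond /=.
have [->|[x xS]] := set_0Vmem S.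
  by rewrite big_pred0 /nzsign ?cards0 ?eqxx ?subrr ?oppr0.
have /prednK cardS : (0 < #|S|)%N by apply/card_gt0P; exists x.
have ltSn : (#|S|.-1 < #|gV G|)%N by rewrite -ltnS cardS ltnS max_card.
rewrite (big_pred1 (Ordinal ltSn)) => [|k];
  last by rewrite -[#|S| in LHS]cardS eqSS eq_sym.
have /negbTE S_neq0 : S != set0 by apply/set0Pn; exists x.
by rewrite /nzsign S_neq0 -{2}cardS exprS mulN1r subr0 opprK.
Qed.

Lemma clique_sprod (G H : graph) (S : {set gV (sprod G H)}) :
  is_clique (sprod G H) S = is_clique G (fst @: S) && is_clique H (snd @: S).
Proof.
apply/is_cliqueP/andP => [clS | [/is_cliqueP clG /is_cliqueP clH]].
  have adjS p q : p \in S -> q \in S -> p.1 != q.1 \/ p.2 != q.2 ->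
      sprod_adj G H p q.
    by move=> pS qS npq; apply: clS => //; case: npq; apply: contraNneq => ->.
  split; apply/is_cliqueP => _ _ /imsetP[p pS ->] /imsetP[q qS ->] npq.
    move: (adjS p q pS qS (or_introl npq)).
    by rewrite /sprod_adj (negbTE npq) /= => /orP[] /andP[].
  move: (adjS p q pS qS (or_intror npq)).
  by rewrite /sprod_adj (negbTE npq) /= => /orP[] /andP[].
move=> [a b] [c d] abS cdS; rewrite /= /sprod_adj /=.
have [aS cS] := (imset_f fst abS, imset_f fst cdS).
have [bS dS] := (imset_f snd abS, imset_f snd cdS).
have [<-|nac] := eqVneq a c; have [<-|nbd] := eqVneq b d => /=.
- by rewrite eqxx.
- by rewrite clH.
- by rewrite clG.
- by rewrite clG ?clH.
Qed.

Lemma chi_sprod (G H : graph) : chi (sprod G H) = chi G * chi H.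
Proof.
rewrite !chiE mulrNN big_distrlr /=.
under eq_bigl do rewrite clique_sprod.
rewrite (partition_big (fun S : {set gV G * gV H} => (fst @: S, snd @: S))
  (fun p : {set gV G} * {set gV H} => is_clique G p.1 && is_clique H p.2)) //=.
rewrite pair_big /= -sumrN; apply: eq_bigr => -[A B] /= /andP[clA clB].
rewrite -[RHS]opprK -sum_nzsign_proj; congr (- _); apply: eq_bigl => S.
rewrite xpair_eqE.
by case: eqP => [->|]; case: eqP => [->|] //=; rewrite ?clA ?clB ?andbF.
Qed.

Section DisjointUnion.

Variables G H : graph.

Definition dunion_set (A : {set gV G}) (B : {set gV H}) : {set gV (dunion G H)} :=
  [set x | match x with inl a => a \in A | inr b => b \in B end].

Lemma card_dunion_set (A : {set gV G}) (B : {set gV H}) :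
  #|dunion_set A B| = (#|A| + #|B|)%N.
Proof.
rewrite -!sum1_card big_sumType /=.
by congr addn; apply: eq_bigl => x; rewrite inE.
Qed.

Lemma dunion_set_eq0 (A : {set gV G}) (B : {set gV H}) :
  (dunion_set A B == set0) = (A == set0) && (B == set0).
Proof. by rewrite -!cards_eq0 card_dunion_set addn_eq0. Qed.

Lemma clique_dunion_set (A : {set gV G}) (B : {set gV H}) :
  is_clique (dunion G H) (dunion_set A B) =
  [&& is_clique G A, is_clique H B & (A == set0) || (B == set0)].
Proof.
apply/is_cliqueP/and3P => [clAB | [/is_cliqueP clA /is_cliqueP clB AB0]].
  split.
  - apply/is_cliqueP => x y xA yA nxy.
    by apply: (clAB (inl x) (inl y)); rewrite ?inE //; apply: contraNneq nxy => -[].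
  - apply/is_cliqueP => x y xB yB nxy.
    by apply: (clAB (inr x) (inr y)); rewrite ?inE //; apply: contraNneq nxy => -[].
  - have [->|[a aA]] := set_0Vmem A; first by rewrite eqxx.
    have [->|[b bB]] := set_0Vmem B; first by rewrite eqxx orbT.
    by have := clAB (inl a) (inr b); rewrite !inE => /(_ aA bB isT).
have AB a b : a \in A -> b \in B -> False.
  by case/orP: AB0 => /eqP->; rewrite inE.
move=> [a|b] [c|d]; rewrite !inE //=.
- by move=> aA cA nac; apply: clA => //; apply: contraNneq nac => ->.
- by move=> aA /(AB a).
- by move=> bB /AB/(_ bB).
- by move=> bB dB nbd; apply: clB => //; apply: contraNneq nbd => ->.
Qed.

Lemma chi_dunion : chi (dunion G H) = chi G + chi H.
Proof.
rewrite !chiE -opprD; congr (- _).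
rewrite (reindex (fun p => dunion_set p.1 p.2)) /=; last first.
  exists (fun S : {set gV (dunion G H)} => (inl @^-1: S, inr @^-1: S)) => [[A B] _|S _].
    by congr pair; apply/setP => x; rewrite !inE.
  by apply/setP => -[a|b]; rewrite !inE.
under eq_bigl do rewrite clique_dunion_set andbA.
rewrite big_mkcondr -(pair_big (is_clique G) (is_clique H)
  (fun A B => if (A == set0) || (B == set0) then nzsign (dunion_set A B) else 0)) /=.
transitivity (\sum_(A | is_clique G A) \sum_(B | is_clique H B)
                (nzsign A * (B == set0)%:R + (A == set0)%:R * nzsign B)).
  apply: eq_bigr => A _; apply: eq_bigr => B _.
  rewrite /nzsign dunion_set_eq0 card_dunion_set exprD.
  by case: eqP => [->|_]; case: eqP => [->|_]; rewrite ?cards0 /=; ring.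
rewrite [LHS](eq_bigr (fun A =>
  nzsign A + (A == set0)%:R * \sum_(B | is_clique H B) nzsign B)).
  by rewrite big_split /= -mulr_suml sum_clique_eq0 mul1r.
by move=> A _; rewrite big_split /= -!mulr_sumr sum_clique_eq0 mulr1.
Qed.

End DisjointUnion.

Lemma chi_giso (G H : graph) : giso G H -> chi G = chi H.
Proof.
case=> f [[g fK gK] f_adj]; have f_inj := can_inj fK.
have clf (S : {set gV G}) : is_clique H (f @: S) = is_clique G S.
  apply/is_cliqueP/is_cliqueP => [clS x y xS yS nxy | clS].
    by rewrite -f_adj clS ?imset_f ?(inj_eq f_inj).
  move=> _ _ /imsetP[x xS ->] /imsetP[y yS ->] nfxy.
  by rewrite f_adj clS //; apply: contraNneq nfxy => ->.
rewrite !chiE; congr (- _).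
rewrite [RHS](reindex (fun S : {set gV G} => f @: S)) /=; last first.
  exists (fun S : {set gV H} => g @: S) => S _;
  by rewrite -imset_comp (eq_imset _ fK, eq_imset _ gK) imset_id.
apply: eq_big => S; first by rewrite clf.
by rewrite /nzsign card_imset // imset_eq0.
Qed.

Lemma chi_empty_graph : chi empty_graph = 0.
Proof. by rewrite /chi card_void big_ord0. Qed.

Lemma chi_K1 : chi K1 = 1.
Proof.
have clK1 S : is_clique K1 S by apply/is_cliqueP => -[] -[].
rewrite /chi card_unit big_ord1 /vk expr0 mul1r.
have -> : [set S | is_clique K1 S & #|S| == 1%N] = [set S : {set unit} | #|S| == 1%N].
  by apply/setP => S; rewrite !inE clK1.
by rewrite card_draws card_unit.
Qed.

Theorem mainTheorem3 :
  (forall x y : gdiff, grot_eq x y -> chiG x = chiG y) /\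
  chiG gzero = 0 /\
  chiG gone = 1 /\
  (forall x y : gdiff, chiG (gadd x y) = chiG x + chiG y) /\
  (forall x y : gdiff, chiG (gmul x y) = chiG x * chiG y).
Proof.
split.
  move=> [A B] [C D] [K /chi_giso]; rewrite /chiG /= !chi_dunion => /addIr chiAD.
  by rewrite -(addrK (chi D) (chi A)) chiAD; ring.
split; first by rewrite /chiG subrr.
split; first by rewrite /chiG /= chi_K1 chi_empty_graph subr0.
by split=> [[A B] [C D] | [A B] [C D]]; rewrite /chiG /= !chi_dunion ?chi_sprod; ring.
Qed.
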